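(* Let $k\ge2$ be an integer and $m,n\in\mathbb Z$. Then $L_k^{(m)}L_k^{(n)}=L_k^{(m+n)}L_k^{(0)}=L_k^{(n)}L_k^{(m)}$.
   Context: Fix an integer $k\ge2$. Let $Q_k$ be the $k\times k$ matrix whose first row is all ones, with $(Q_k)_{i+1,i}=1$ for $1\le i\le k-1$ and all other entries $0$, and for $r\in\mathbb Z$ let $Q_k^r$ denote its $r$-th power. The generalized Lucas sequence of order $k$, $(l_{k,n})_{n\in\mathbb Z}$, is the two-sided sequence satisfying $l_{k,n+k}=l_{k,n+k-1}+\dots+l_{k,n}$ for all $n\in\mathbb Z$ with initial values $l_{k,r}=\operatorname{trace}(Q_k^r)$ for $0\le r\le k-1$ (so $l_{k,0}=k$ and $l_{k,r}=2^r-1$ for $1\le r\le k-1$). For $n\in\mathbb Z$ the generalized Lucas matrix $L_k^{(n)}$ is the $k\times k$ matrix with entries $(L_k^{(n)})_{i,1}=l_{k,k+n-i}$ and $(L_k^{(n)})_{i,j}=\sum_{m=n-i+j-1}^{k+n-i-1} l_{k,m}$ for $2\le j\le k$, $1\le i\le k$. *)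

From mathcomp Require Import all_boot all_order all_algebra.
Set Implicit Arguments. Unset Strict Implicit. Unset Printing Implicit Defensive.
Import GRing.Theory Num.Theory.
Local Open Scope ring_scope.

(* Q_k : first row all ones, (Q_k)_{i+1,i} = 1 (1-indexed), 0 elsewhere.
   0-indexed: entry (i,j) is 1 iff i = 0, or i = j+1. *)
Definition Qk (k : nat) : 'M[int]_k :=
  \matrix_(i < k, j < k) (if (i == 0%N :> nat) then 1 else ((i : nat) == j.+1)%:R).

(* initial window (l_{k,0}, ..., l_{k,k-1}) with l_{k,r} = trace (Q_k^r) *)
Definition lwin0 (k : nat) : seq int := [seq \tr (Qk k ^+ r) | r <- iota 0 k].

(* a window w = (l_n, ..., l_{n+k-1}); forward shift gives (l_{n+1},...,l_{n+k}) *)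
Definition fstep (w : seq int) : seq int := rcons (behead w) (\sum_(x <- w) x).

(* backward shift gives (l_{n-1}, ..., l_{n+k-2}), using
   l_{n-1} = l_{n+k-1} - (l_n + ... + l_{n+k-2}) *)
Definition bstep (k : nat) (w : seq int) : seq int :=
  (last 0 w - \sum_(x <- take k.-1 w) x) :: take k.-1 w.

Definition lucas (k : nat) (n : int) : int :=
  match n with
  | Posz p => head 0 (iter p fstep (lwin0 k))
  | Negz p => head 0 (iter p.+1 (bstep k) (lwin0 k))   (* index -(p+1) *)
  end.

(* generalized Lucas matrix L_k^{(n)}, 0-indexed (i' = i-1, j' = j-1):
   column 0: l_{k+n-i'-1};
   column j' >= 1: sum_{m = n-i'+j'-1}^{k+n-i'-2} l_m  (k - j' terms). *)
Definition Lmat (k : nat) (n : int) : 'M[int]_k :=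
  \matrix_(i < k, j < k)
    if (j == 0%N :> nat) then lucas k (k%:Z + n - i%:Z - 1)
    else \sum_(t < k - j) lucas k (n - i%:Z + j%:Z - 1 + t%:Z).

(** Writing [Q] for [Qk k], the recurrence gives [Q * L(n) = L(n + 1) = L(n) * Q].
    Hence [L(m + 1) L(n) = L(m) Q L(n) = L(m) L(n + 1)]: the product [L(m) L(n)]
    depends only on [m + n], so it equals both [L(m + n) L(0)] and [L(n) L(m)]. *)
From mathcomp Require Import all_boot all_order all_algebra.
From mathcomp Require Import zify.
Import GRing.Theory Num.Theory.
Local Open Scope ring_scope.

Lemma int_shift_invariant {T : Type} (g : int -> T) :
  (forall m, g (m + 1) = g m) -> forall m, g m = g 0.
Proof.
move=> gS; elim/int_rect => // n IH.
  by rewrite -IH -(gS n); congr g; lia.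
by rewrite -IH -(gS (- n.+1%:Z)); congr g; lia.
Qed.

Section LucasWindow.

Variable k : nat.

Definition lucas_window (n : int) : seq int :=
  match n with
  | Posz p => iter p fstep (lwin0 k.+1)
  | Negz p => iter p.+1 (bstep k.+1) (lwin0 k.+1)
  end.

Lemma lucas_window_head n : lucas k.+1 n = head 0 (lucas_window n).
Proof. by case: n. Qed.

Lemma size_fstep w : (0 < size w)%N -> size (fstep w) = size w.
Proof. by case: w => //= a w _; rewrite size_rcons. Qed.

Lemma size_bstep w : size w = k.+1 -> size (bstep k.+1 w) = k.+1.
Proof. by move=> sw; rewrite /= size_take sw ltnSn. Qed.

Lemma bstepK w : size w = k.+1 -> fstep (bstep k.+1 w) = w.
Proof.
rewrite /fstep /bstep /= big_cons subrK.
case/lastP: w => [|s x] //; rewrite size_rcons => -[<-].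
by rewrite last_rcons -[rcons s x]cats1 take_size_cat // cats1.
Qed.

Lemma size_lucas_window n : size (lucas_window n) = k.+1.
Proof.
have s0 : size (lwin0 k.+1) = k.+1 by rewrite size_map size_iota.
case: n => p; elim: p => [|p IH] //=.
- by rewrite size_fstep IH.
- exact: size_bstep.
- exact: size_bstep.
Qed.

Lemma fstep_lucas_window n : fstep (lucas_window n) = lucas_window (n + 1).
Proof.
case: n => [p|[|p]]; first by rewrite /= addn1.
  by rewrite /= bstepK // size_map size_iota.
have -> : Negz p.+1 + 1 = Negz p by rewrite !NegzE; lia.
by rewrite [lucas_window (Negz p.+1)]/= bstepK // (size_lucas_window (Negz p)).
Qed.

Lemma nth_lucas_window n t :
  (t < k.+1)%N -> nth 0 (lucas_window n) t = lucas k.+1 (n + t%:Z).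
Proof.
elim: t n => [|t IH] n tk; first by rewrite addr0 lucas_window_head; case: lucas_window.
have -> : nth 0 (lucas_window n) t.+1 = nth 0 (fstep (lucas_window n)) t.
  by rewrite nth_rcons size_behead size_lucas_window ifT // nth_behead.
by rewrite fstep_lucas_window IH 1?ltnW //; congr lucas; lia.
Qed.

Lemma lucas_rec n :
  lucas k.+1 (n + k.+1%:Z) = \sum_(t < k.+1) lucas k.+1 (n + t%:Z).
Proof.
have -> : n + k.+1%:Z = (n + 1) + k%:Z by lia.
rewrite -nth_lucas_window // -fstep_lucas_window.
rewrite nth_rcons size_behead size_lucas_window ltnn eqxx.
rewrite (big_nth 0) size_lucas_window big_mkord.
by apply: eq_bigr => i _; rewrite nth_lucas_window.
Qed.

End LucasWindow.

Section LucasMatrix.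

Variable k : nat.

Lemma LmatE n (i j : 'I_k.+1) :
  Lmat k.+1 n i j = \sum_(t < k.+1 - j) lucas k.+1 (n - i%:Z + j%:Z - 1 + t%:Z).
Proof.
rewrite mxE; case: eqP => // j0.
by rewrite j0 subn0 -lucas_rec; congr lucas; lia.
Qed.

Lemma mulQmxE (A : 'M[int]_k.+1) i j :
  (Qk k.+1 *m A) i j = if i == 0%N :> nat then \sum_r A r j else A (inord i.-1) j.
Proof.
rewrite mxE; case: ifP => i0.
  by apply: eq_bigr => r _; rewrite mxE i0 mul1r.
have ik : (i.-1 < k.+1)%N by have := ltn_ord i; lia.
rewrite (bigD1 (inord i.-1)) //= big1 ?addr0 => [|r rne].
  by rewrite mxE i0 inordK // prednK ?lt0n ?i0 // eqxx mul1r.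
rewrite mxE i0; case: eqP => [ir|]; last by rewrite mul0r.
by case/eqP: rne; apply/val_inj; rewrite /= inordK // ir.
Qed.

Lemma mulQLmat n : Qk k.+1 *m Lmat k.+1 n = Lmat k.+1 (n + 1).
Proof.
apply/matrixP => i j; rewrite mulQmxE !LmatE; case: ifP => i0; last first.
  have ik : (i.-1 < k.+1)%N by have := ltn_ord i; lia.
  by rewrite inordK //; apply: eq_bigr => t _; congr lucas; move/negbT: i0; lia.
under eq_bigr => r _ do rewrite LmatE.
rewrite exchange_big /=; apply: eq_bigr => t _.
have -> : n + 1 - i%:Z + j%:Z - 1 + t%:Z = (n + j%:Z + t%:Z - k.+1%:Z) + k.+1%:Z.
  by move/eqP: i0; lia.
rewrite lucas_rec (reindex_inj rev_ord_inj) /=; apply: eq_bigr => s _.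
by congr lucas; have := ltn_ord s; lia.
Qed.

Lemma mulLmatQ n : Lmat k.+1 n *m Qk k.+1 = Lmat k.+1 (n + 1).
Proof.
apply/matrixP => i j; rewrite mxE big_ord_recl [Qk _ _ _]mxE /= mulr1.
under eq_bigr => r _ do rewrite [Qk _ _ _]mxE lift0 eqSS /=.
rewrite [Lmat _ _ i ord0]mxE /= LmatE.
case: (ltnP j k) => jk; last first.
  have -> : (k.+1 - j = 1)%N by have := ltn_ord j; lia.
  rewrite big1 ?big_ord1 ?addr0 /= => [|r _]; last first.
    by case: eqP => [|]; [have := ltn_ord r; lia | rewrite mulr0].
  by congr lucas; have := ltn_ord j; lia.
rewrite (bigD1 (Ordinal jk)) //= eqxx mulr1 big1 ?addr0 => [|r rne]; last first.
  by case: eqP => [e|]; [case/eqP: rne; apply/val_inj | rewrite mulr0].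
rewrite LmatE /= /bump /= add1n subSS (subSn (ltnW jk)) big_ord_recr /= addrC.
by congr (_ + _); [congr lucas | apply: eq_bigr => t _; congr lucas]; lia.
Qed.

Lemma mulLmat_shift m n :
  Lmat k.+1 (m + 1) *m Lmat k.+1 n = Lmat k.+1 m *m Lmat k.+1 (n + 1).
Proof. by rewrite -(mulLmatQ m) -(mulQLmat n) mulmxA. Qed.

Lemma mulLmat_sum m n :
  Lmat k.+1 m *m Lmat k.+1 n = Lmat k.+1 (m + n) *m Lmat k.+1 0.
Proof.
pose g j := Lmat k.+1 (m + n - j) *m Lmat k.+1 j.
have gS j : g (j + 1) = g j.
  by rewrite /g -mulLmat_shift opprD addrA subrK.
by have := int_shift_invariant g gS n; rewrite /g subr0 addrK.
Qed.

End LucasMatrix.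

Theorem theorem5 (k : nat) (hk : (2 <= k)%N) (m n : int) :
  Lmat k m *m Lmat k n = Lmat k (m + n) *m Lmat k 0 /\
  Lmat k (m + n) *m Lmat k 0 = Lmat k n *m Lmat k m.
Proof.
case: k hk => // k _; split.
  exact: mulLmat_sum.
by rewrite (mulLmat_sum k n m) addrC.
Qed.
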